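(* Let $d\ge2$, $q\ge2$, $n\ge1$, let $p\in\mathbb{Z}/q\mathbb{Z}$ with $\gcd(p,q)=1$ and let $p^*$ be the inverse of $p$ in $\mathbb{Z}/q\mathbb{Z}$. For $1\le i\le n$ let $\mathcal{O}_i$ be the $\sigma_d$-orbit of a point $t_i\in\mathbb{T}$ with $|\mathcal{O}_i|=q$, where the orbits $\mathcal{O}_1,\dots,\mathcal{O}_n$ are pairwise distinct and $t_1<t_2<\dots<t_n$. Write $t_i=(a^{(i)}_0,a^{(i)}_1,\dots,a^{(i)}_{q-1})$ in $q$-tuple notation. Let $A=\bigcup_{i=1}^n\mathcal{O}_i$, listed as $A=\{u_0<u_1<\dots<u_{nq-1}\}$ with indices in $\mathbb{Z}/nq\mathbb{Z}$. Then the following are equivalent: (a) each $t_i$ is the least element of $\mathcal{O}_i$, and $A$ is $\sigma_d$-rotational with $\sigma_d(u_j)=u_{j+np}$ for all $j$ (i.e. $A$ has rotation number $np/nq=p/q$); (b) the sequence of length $nq$ $$a^{(1)}_0,a^{(2)}_0,\dots,a^{(n)}_0,\ a^{(1)}_{p^*},a^{(2)}_{p^*},\dots,a^{(n)}_{p^*},\ a^{(1)}_{2p^*},\dots,a^{(n)}_{2p^*},\ \dots,\ a^{(1)}_{(q-1)p^*},\dots,a^{(n)}_{(q-1)p^*}$$ (i.e. the terms $a^{(i)}_{kp^*}$ ordered first by $k=0,1,\dots,q-1$ and then by $i=1,\dots,n$) is nondecreasing, and moreover $a^{(n)}_{-(p+1)p^*}<a^{(1)}_{-pp^*}$.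
   Context: $\mathbb{T}=\mathbb{R}/\mathbb{Z}$, totally ordered by choosing representatives in $[0,1)$; $\sigma_d(t)=dt$. A finite set $A=\{u_0<\dots<u_{N-1}\}\subset\mathbb{T}$ (indices in $\mathbb{Z}/N\mathbb{Z}$) is $\sigma_d$-rotational if for some fixed $0\ne P\in\mathbb{Z}/N\mathbb{Z}$, $\sigma_d(u_j)=u_{j+P}$ for all $j$; its rotation number is $P/N$. $q$-tuple notation: for digits $a_i\in\{0,\dots,d-1\}$, $(a_0,\dots,a_{q-1})$ denotes the point of $\mathbb{T}$ with purely periodic base-$d$ expansion $0.\overline{a_0a_1\dots a_{q-1}}$, with digit indices read in $\mathbb{Z}/q\mathbb{Z}$ (so every point of period $q$ under $\sigma_d$ has such a representation). Index expressions such as $kp^*$, $-(p+1)p^*$, $-pp^*$ are computed in $\mathbb{Z}/q\mathbb{Z}$. *)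

From mathcomp Require Import all_boot all_order all_algebra.
From mathcomp Require Import all_classical all_reals.
Set Implicit Arguments. Unset Strict Implicit. Unset Printing Implicit Defensive.
Import Order.TTheory GRing.Theory Num.Theory.
Local Open Scope ring_scope.
Local Open Scope classical_set_scope.

(* The circle T = R/Z is represented by representatives in [0,1). *)
Definition frac {R : realType} (x : R) : R := x - (Num.floor x)%:~R.

Definition sigma {R : realType} (d : nat) (t : R) : R := frac (d%:R * t).

Definition sorbit {R : realType} (d : nat) (t : R) : set R :=
  [set iter k (sigma d) t | k in [set: nat]].

(* q-tuple notation: the point 0.\overline{a_0 a_1 ... a_{q-1}} in base d,
   i.e. (sum_{k<q} a_k d^(q-1-k)) / (d^q - 1). *)
Definition qtuple {R : realType} (d q : nat) (a : nat -> nat) : R :=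
  (\sum_(k < q) (a k)%:R * (d%:R ^+ (q - 1 - k)%N)) / (d%:R ^+ q - 1).

From Pilot Require Import Defs.
From mathcomp Require Import all_boot all_order all_algebra.
From mathcomp Require Import all_classical all_reals.
From mathcomp Require Import zify ring lra.
Set Implicit Arguments.
Unset Strict Implicit.
Unset Printing Implicit Defensive.

Import Order.TTheory GRing.Theory Num.Theory.
Local Open Scope ring_scope.
Local Open Scope classical_set_scope.

(* Put w_i(y) := sigma^(y p* )(t_i). Then sigma (w_i(y)) = w_i(y + p), and the
   leading digit of w_i(y) is a^(i)_(y p* ). Condition (a) says exactly that A
   is enumerated as u_(y n + i) = w_i(y); as two increasing enumerations of the
   same set agree, this holds iff that list is increasing. An increasing list has
   nondecreasing leading digits, and the strict inequality comes from the two
   entries around position (q - p) n, whose images under sigma are the last and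
   the first entry. Conversely, if the digits of two such points stay ordered
   along their orbits, the difference g_j of their j-th images satisfies
   g_(j+1) <= d g_j. Periodicity then forces g_0 >= 0 (strictly, as the orbits
   are distinct); at the wrap-around the strict digit inequality makes g_J > 0
   at some step J, and this propagates back to g_0 > 0. *)

Lemma ler_subexpanding (R : realDomainType) (D : R) (g : nat -> R) : 0 <= D ->
  (forall j, g j.+1 <= D * g j) -> forall i k, g (i + k)%N <= D ^+ k * g i.
Proof.
move=> D0 hg i; elim=> [|k IH]; first by rewrite addn0 expr0 mul1r.
by rewrite addnS (le_trans (hg _)) // exprS -mulrA ler_wpM2l.
Qed.

Lemma subexpanding_periodic_ge0 (R : realDomainType) (D : R) (g : nat -> R) k :
  0 <= D -> 1 < D ^+ k -> (forall j, g j.+1 <= D * g j) -> g k = g 0%N ->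
  0 <= g 0%N.
Proof.
move=> D0 Dk hg gk; have := ler_subexpanding D0 hg 0 k.
rewrite add0n gk => le_g0.
have : 0 <= (D ^+ k - 1) * g 0%N by rewrite mulrBl mul1r subr_ge0.
by rewrite pmulr_rge0 // subr_gt0.
Qed.

Lemma subexpanding_gt0 (R : realDomainType) (D : R) (g : nat -> R) k : 0 <= D ->
  (forall j, (j < k)%N -> g j.+1 <= D * g j) -> 0 < g k -> 0 < g 0%N.
Proof.
elim: k g => [//|k IH] g D0 hg gk.
have g1 : 0 < g 1%N by apply: (IH (fun j => g j.+1)) => // j jk; apply: hg.
have := lt_le_trans g1 (hg 0%N isT); nra.
Qed.

Lemma nat_le_of_ltrD (R : realDomainType) (s s' : nat) (e f : R) :
  s%:R + e < s'%:R + f -> 0 <= e -> f < 1 -> (s <= s')%N.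
Proof.
move=> lt_sf e0 f1; rewrite leqNgt; apply/negP.
by rewrite -(ler_nat R) -addn1 natrD => ?; lra.
Qed.

Lemma incr_enum_unique (disp : Order.disp_t) (T : orderType disp) (f g : nat -> T) N :
  (forall j k, (j < k < N)%N -> (f j < f k)%O) ->
  (forall j k, (j < k < N)%N -> (g j < g k)%O) ->
  [set f j | j in `I_N] = [set g j | j in `I_N] ->
  forall m, (m < N)%N -> f m = g m.
Proof.
move=> f_incr g_incr fg; elim/ltn_ind=> m IH mN.
have [k kN gkfm] : [set g j | j in `I_N] (f m) by rewrite -fg; exists m.
have [k' k'N fk'gm] : [set f j | j in `I_N] (g m) by rewrite fg; exists m.
case: (ltngtP k m) => [km|mk|km]; last by rewrite -gkfm km.
  have := f_incr k m.
  by rewrite km mN (IH k km (ltn_trans km mN)) -gkfm ltxx => /(_ isT).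
case: (ltngtP k' m) => [k'm|mk'|k'm]; last by rewrite -fk'gm k'm.
  have := g_incr k' m.
  by rewrite k'm mN -(IH k' k'm (ltn_trans k'm mN)) -fk'gm ltxx => /(_ isT).
have := g_incr m k; rewrite mk kN gkfm => /(_ isT) gmfm.
have := f_incr m k'; rewrite mk' k'N fk'gm => /(_ isT) fmgm.
by have := lt_trans gmfm fmgm; rewrite ltxx.
Qed.

Lemma lt_chain (disp : Order.disp_t) (T : porderType disp) (f : nat -> T) N :
  (forall m, (m.+1 < N)%N -> (f m < f m.+1)%O) ->
  forall j k, (j < k < N)%N -> (f j < f k)%O.
Proof.
move=> f_succ j k /andP[jk kN].
apply: (@homo_ltn_in T [pred m | (m < N)%N] f (fun x y => (x < y)%O)) => //=.
- by move=> y x z; apply: lt_trans.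
- by move=> i l _ lN m /andP[_ /ltn_trans]; apply.
- by move=> i _; apply: f_succ.
- exact: ltn_trans jk kN.
Qed.

Lemma frac_natD (R : realType) (k : nat) (y : R) : 0 <= y < 1 -> Defs.frac (k%:R + y) = y.
Proof.
move=> /andP[y0 y1]; rewrite /Defs.frac.
have -> : Num.floor (k%:R + y) = k%:Z.
  by apply: floor_def; rewrite intrD -!natz; apply/andP; split; lra.
by rewrite -natz; lra.
Qed.

Definition qtuple_shift {R : realType} (d q : nat) (c : nat -> nat) (r : nat) : R :=
  qtuple d q (fun k => c ((k + r) %% q)%N).

Section QtupleShift.
Variables (R : realType) (d q : nat) (c : nat -> nat).
Hypotheses (d_ge2 : (2 <= d)%N) (q_gt0 : (0 < q)%N).
Hypothesis c_lt_d : forall k, (k < q)%N -> (c k < d)%N.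

Let qshift : nat -> R := qtuple_shift d q c.

Let expq_gt1 : 1 < d%:R ^+ q :> R.
Proof. by rewrite exprn_egt1 ?ltr1n // -lt0n. Qed.

Lemma qtuple_shift_mod r : qshift (r %% q) = qshift r.
Proof.
by congr (_ / _); apply: eq_bigr => k _; rewrite modnDmr.
Qed.

Lemma qtuple_shift_ge0 r : 0 <= qshift r.
Proof.
apply: divr_ge0; last by rewrite subr_ge0 ltW.
by apply: sumr_ge0 => k _; rewrite mulr_ge0 ?exprn_ge0.
Qed.

Lemma qtuple_shift_step r : d%:R * qshift r = (c (r %% q))%:R + qshift r.+1.
Proof.
have M0 : d%:R ^+ q - 1 != 0 :> R by rewrite subr_eq0 gt_eqF.
rewrite /qshift /qtuple_shift /qtuple.
case: q q_gt0 M0 => // q' _ M0.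
rewrite big_ord_recl big_ord_recr /= subn1 /= subn0.
have shift_sum :
    d%:R * \sum_(i < q') (c ((bump 0 i + r) %% q'.+1))%:R * d%:R ^+ (q' - bump 0 i)
    = \sum_(i < q') (c ((i + r.+1) %% q'.+1))%:R * d%:R ^+ (q' - i) :> R.
  rewrite mulr_sumr; apply: eq_bigr => i _.
  rewrite /bump /= add1n addSnnS.
  have -> : (q' - i = (q' - i.+1).+1)%N by have := ltn_ord i; lia.
  by rewrite exprS; ring.
have -> : ((q' + r.+1) %% q'.+1 = r %% q'.+1)%N by rewrite -addSnnS modnDl.
rewrite subnn expr0 add0n mulrA mulrDr mulrA shift_sum.
move: M0; rewrite exprS => M0.
by field.
Qed.

(* [1 - qshift r] grows by at most a factor [d] per shift, and [qshift] is
   [q]-periodic. *)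
Lemma qtuple_shift_lt1 : qshift 0 < 1 -> forall r, qshift r < 1.
Proof.
move=> lt1 r; pose g j := 1 - qshift j.
have g_step j : g j.+1 <= d%:R * g j.
  rewrite /g mulrBr mulr1 qtuple_shift_step.
  have : ((c (j %% q)).+1 <= d)%N by rewrite c_lt_d ?ltn_mod.
  by rewrite -(ler_nat R) -addn1 natrD => ?; lra.
have := ler_subexpanding (ler0n R d) g_step r (q * r.+1 - r).
have le_r : (r <= q * r.+1)%N by nia.
have periodic : qshift (q * r.+1) = qshift 0 by rewrite -qtuple_shift_mod modnMr.
rewrite subnKC // /g periodic.
have : 0 < d%:R ^+ (q * r.+1 - r) :> R by rewrite exprn_gt0 // ltr0n; lia.
nra.
Qed.

Lemma iter_sigma_qtuple_shift : qshift 0 < 1 ->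
  forall r, iter r (sigma d) (qshift 0) = qshift r.
Proof.
move=> lt1; elim=> [//|r IH].
by rewrite iterS IH /sigma qtuple_shift_step frac_natD // qtuple_shift_ge0 qtuple_shift_lt1.
Qed.

End QtupleShift.

Lemma block_lt n q y i : (y < q)%N -> (i < n)%N -> (y * n + i < n * q)%N.
Proof. by move=> yq ilt; nia. Qed.

Lemma block_succ n y : (0 < n)%N -> ((y * n + (n - 1)).+1 = y.+1 * n + 0)%N.
Proof. by move=> n_gt0; rewrite mulSnr addn0 -addnS subn1 prednK. Qed.

Lemma modn_block n q y i : (i < n)%N -> (0 < q)%N ->
  ((y * n + i) %% (n * q) = (y %% q) * n + i)%N.
Proof.
move=> ilt q_gt0.
rewrite {1}(divn_eq y q) mulnDl -mulnA [(q * n)%N]mulnC -addnA modnMDl modn_small //.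
by apply: block_lt; rewrite ?ltn_mod.
Qed.

Lemma modn_blockD n q y i k : (i < n)%N -> (0 < q)%N ->
  ((y * n + i + n * k) %% (n * q) = ((y + k) %% q) * n + i)%N.
Proof.
move=> ilt q_gt0.
by rewrite -addnA [(i + _)%N]addnC addnA [(n * k)%N]mulnC -mulnDl modn_block.
Qed.

Lemma modn_compl_mul q k x : (k <= q)%N -> ((q - k) * x = q - k * x %% q %[mod q])%N.
Proof.
case: q => [|q] kq; first by move: kq; rewrite leqn0 => /eqP ->.
apply/eqP; rewrite -(eqn_modDr (k * x %% q.+1)) subnK; last by rewrite ltnW ?ltn_mod.
by rewrite modnDmr -mulnDl subnK // modnMr modnn.
Qed.

Lemma modn_visit_before q p ps y : (0 < p < q)%N -> (p * ps %% q = 1 %% q)%N ->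
  (y.+1 < q)%N -> exists2 J, ((y + J * p) %% q = q - p.+1)%N &
    forall j, (j < J)%N -> (((y + j * p) %% q).+1 < q)%N.
Proof.
move=> /andP[p_gt0 p_lt_q] p_ps y_lt.
have hit : exists j, ((y + j * p) %% q == q - 1)%N.
  exists ((q - 1 + (q - y)) * ps)%N.
  rewrite -modnDmr -mulnA [(ps * p)%N]mulnC -modnMmr p_ps modnMmr muln1.
  have y_le : (y <= q)%N by lia.
  by rewrite modnDmr addnCA subnKC // modnDr modn_small //; lia.
case: (ex_minnP hit) => Js /eqP hitJs minJs.
have Js_gt0 : (0 < Js)%N.
  rewrite lt0n; apply/eqP => Js0; move: hitJs.
  by rewrite Js0 mul0n addn0 modn_small; lia.
exists Js.-1 => [|j j_lt].
  move: hitJs; rewrite -{1}(prednK Js_gt0) mulSnr addnA -modnDml.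
  move: ((y + Js.-1 * p) %% q)%N (ltn_mod (y + Js.-1 * p) q) => z z_lt.
  move=> e; have := divn_eq (z + p) q; rewrite e.
  by case: ((z + p) %/ q)%N => [|k]; rewrite ?mulSn; lia.
have nhit : ((y + j * p) %% q != q - 1)%N by apply/negP => /minJs; lia.
by move: ((y + j * p) %% q)%N (ltn_mod (y + j * p) q) nhit => z; lia.
Qed.

Section RotationalUnion.
Variables (R : realType) (d q n p ps : nat).
Variables (t : nat -> R) (a : nat -> nat -> nat) (u : nat -> R).
Hypotheses (d_ge2 : (2 <= d)%N) (q_ge2 : (2 <= q)%N) (n_gt0 : (0 < n)%N).
Hypotheses (p_lt_q : (p < q)%N) (p_ps : (p * ps %% q = 1 %% q)%N).
Hypothesis t_range : forall i, (i < n)%N -> 0 <= t i < 1.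
Hypothesis orbits_distinct :
  forall i j, (i < j < n)%N -> sorbit d (t i) <> sorbit d (t j).
Hypothesis t_incr : forall i, (i.+1 < n)%N -> t i < t i.+1.
Hypothesis a_lt_d : forall i k, (i < n)%N -> (k < q)%N -> (a i k < d)%N.
Hypothesis t_qtuple : forall i, (i < n)%N -> t i = qtuple d q (a i).
Hypothesis u_incr : forall j k, (j < k < n * q)%N -> u j < u k.
Hypothesis u_image :
  [set u j | j in `I_(n * q)] = [set x | exists2 i, (i < n)%N & sorbit d (t i) x].

Let q_gt0 : (0 < q)%N := ltnW q_ge2.

Let p_gt0 : (0 < p)%N.
Proof. by move: p_ps; case: p => //; rewrite mul0n mod0n modn_small. Qed.

Let mulpsK x : (x * ps * p = x %[mod q])%N.
Proof. by rewrite -mulnA [(ps * p)%N]mulnC -modnMmr p_ps modnMmr muln1. Qed.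

Let mulpK x : (x * p * ps = x %[mod q])%N.
Proof. by rewrite -mulnA -modnMmr p_ps modnMmr muln1. Qed.

Let expq_gt1 : 1 < d%:R ^+ q :> R.
Proof. by rewrite exprn_egt1 ?ltr1n // -lt0n. Qed.

Let u_inj j k : (j < n * q)%N -> (k < n * q)%N -> u j = u k -> j = k.
Proof.
move=> jN kN e; case: (ltngtP j k) => // [jk|kj].
  by have := @u_incr j k; rewrite jk kN e ltxx => /(_ isT).
by have := @u_incr k j; rewrite kj jN e ltxx => /(_ isT).
Qed.

Let u_le j k : (j <= k < n * q)%N -> u j <= u k.
Proof.
case/andP; rewrite leq_eqVlt => /orP[/eqP-> //|jk] kN.
by apply/ltW/u_incr; rewrite jk.
Qed.

Definition orbit_point i r := iter r (sigma d) (t i).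

(* [rot_point i y] is the point w_i(y) of the proof idea: in the coordinate [y],
   [sigma d] acts as [y |-> y + p]. [listed_point] is the enumeration of [A]
   forced by (a). *)
Definition rot_point i y := orbit_point i (y * ps).
Definition rot_digit i y := a i (y * ps %% q).
Definition listed_point m := rot_point (m %% n) (m %/ n).
Definition listed_digit m := rot_digit (m %% n) (m %/ n).

Lemma orbit_point_qtuple i r : (i < n)%N -> orbit_point i r = qtuple_shift d q (a i) r.
Proof.
move=> ilt; have a_i_lt k : (k < q)%N -> (a i k < d)%N by apply: a_lt_d.
have t_shift0 : t i = qtuple_shift d q (a i) 0.
  rewrite t_qtuple // /qtuple_shift /qtuple; congr (_ / _).
  by apply: eq_bigr => k _; rewrite addn0 modn_small.
rewrite /orbit_point t_shift0 iter_sigma_qtuple_shift // -t_shift0.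
by case/andP: (t_range ilt).
Qed.

Lemma orbit_point_range i r : (i < n)%N -> 0 <= orbit_point i r < 1.
Proof.
move=> ilt; have a_i_lt k : (k < q)%N -> (a i k < d)%N by apply: a_lt_d.
rewrite orbit_point_qtuple // qtuple_shift_ge0 // qtuple_shift_lt1 //.
by rewrite -orbit_point_qtuple //; case/andP: (t_range ilt).
Qed.

Lemma orbit_point_mod i r : (i < n)%N -> orbit_point i (r %% q) = orbit_point i r.
Proof. by move=> ilt; rewrite !orbit_point_qtuple // qtuple_shift_mod. Qed.

Lemma orbit_point_step i r : (i < n)%N ->
  d%:R * orbit_point i r = (a i (r %% q))%:R + orbit_point i r.+1.
Proof. by move=> ilt; rewrite !orbit_point_qtuple // qtuple_shift_step. Qed.

Lemma orbit_point_rot i r : (i < n)%N -> orbit_point i r = rot_point i (r * p %% q).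
Proof.
by move=> ilt; rewrite /rot_point -[RHS]orbit_point_mod // modnMml mulpK orbit_point_mod.
Qed.

Lemma rot_point_mod i y : (i < n)%N -> rot_point i (y %% q) = rot_point i y.
Proof. by move=> ilt; rewrite /rot_point -orbit_point_mod // modnMml orbit_point_mod. Qed.

Lemma rot_digit_mod i y : rot_digit i (y %% q) = rot_digit i y.
Proof. by rewrite /rot_digit modnMml. Qed.

Lemma rot_point_addp i y : (i < n)%N -> rot_point i (y + p) = orbit_point i (y * ps).+1.
Proof.
move=> ilt; rewrite /rot_point -orbit_point_mod // -[RHS]orbit_point_mod //.
by rewrite mulnDl -modnDmr p_ps modnDmr addn1.
Qed.

Lemma sigma_rot_point i y : (i < n)%N -> sigma d (rot_point i y) = rot_point i (y + p).
Proof. by move=> ilt; rewrite rot_point_addp. Qed.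

Lemma rot_point_step i y : (i < n)%N ->
  d%:R * rot_point i y = (rot_digit i y)%:R + rot_point i (y + p).
Proof. by move=> ilt; rewrite rot_point_addp // orbit_point_step. Qed.

Lemma rot_point_range i y : (i < n)%N -> 0 <= rot_point i y < 1.
Proof. exact: orbit_point_range. Qed.

Lemma rot_point_diff_le i j y z : (i < n)%N -> (j < n)%N ->
  (rot_digit i y <= rot_digit j z)%N ->
  rot_point j (z + p) - rot_point i (y + p) <= d%:R * (rot_point j z - rot_point i y).
Proof.
move=> ilt jlt; rewrite -(ler_nat R) mulrBr !rot_point_step // => ?; lra.
Qed.

Lemma listed_point_block i y : (i < n)%N -> listed_point (y * n + i) = rot_point i y.
Proof.
by move=> ilt; rewrite /listed_point modnMDl modn_small // divnMDl // divn_small ?addn0.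
Qed.

Lemma listed_digit_block i y : (i < n)%N -> listed_digit (y * n + i) = rot_digit i y.
Proof.
by move=> ilt; rewrite /listed_digit modnMDl modn_small // divnMDl // divn_small ?addn0.
Qed.

Lemma sorbit_sub i j r r' : (i < n)%N -> (j < n)%N ->
  orbit_point i r = orbit_point j r' -> sorbit d (t i) `<=` sorbit d (t j).
Proof.
move=> ilt jlt e x [k _ <-]; exists (k + r * q - r + r')%N => //.
have le_r : (r <= k + r * q)%N by rewrite (leq_trans _ (leq_addl _ _)) // leq_pmulr.
rewrite iterD -/(orbit_point j r') -e /orbit_point -iterD subnK // -/(orbit_point i _).
by rewrite -orbit_point_mod // addnC modnMDl orbit_point_mod.
Qed.

Lemma listed_image : [set listed_point m | m in `I_(n * q)] = [set u j | j in `I_(n * q)].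
Proof.
rewrite u_image; apply/seteqP; split=> [x [m m_lt <-]|x [i ilt [r _ <-]]].
  by exists (m %% n)%N; rewrite ?ltn_mod //; exists (m %/ n * ps)%N.
exists ((r * p %% q) * n + i)%N; first by rewrite /= block_lt ?ltn_mod.
by rewrite listed_point_block // -orbit_point_rot.
Qed.

Section Rotational.
Hypothesis t_least : forall i, (i < n)%N -> forall x, sorbit d (t i) x -> t i <= x.
Hypothesis u_rot :
  forall j, (j < n * q)%N -> sigma d (u j) = u ((j + n * p) %% (n * q))%N.

Lemma iter_sigma_u y i r : (y < q)%N -> (i < n)%N ->
  iter r (sigma d) (u (y * n + i)) = u (((y + r * p) %% q) * n + i).
Proof.
move=> yq ilt; elim: r => [|r IH]; first by rewrite mul0n addn0 modn_small.
rewrite iterS IH u_rot ?block_lt ?ltn_mod // modn_blockD // modnDml.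
by rewrite mulSnr addnA.
Qed.

Lemma t_in_first_block i : (i < n)%N -> exists2 k, (k < n)%N & t i = u k.
Proof.
move=> ilt; have [c c_lt u_c] : [set u j | j in `I_(n * q)] (t i).
  by rewrite u_image; exists i => //; exists 0%N.
have c_div_lt : (c %/ n < q)%N by rewrite ltn_divLR // mulnC.
exists (c %% n)%N; first by rewrite ltn_mod.
have back : orbit_point i ((q - c %/ n) * ps) = u (c %% n).
  rewrite /orbit_point -u_c [in u c](divn_eq c n) iter_sigma_u ?ltn_mod //.
  by rewrite -modnDmr mulpsK modnDmr subnKC ?modnn // ltnW.
apply/eqP; rewrite eq_le -back t_least //=; last by exists ((q - c %/ n) * ps)%N.
by rewrite back -u_c u_le // leq_mod.
Qed.

Lemma u_first_block_in_t k : (k < n)%N -> exists2 i, (i < n)%N & u k = t i.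
Proof.
move=> klt; have k_lt : (k < n * q)%N by rewrite (leq_trans klt) // leq_pmulr.
have [i ilt [r _ u_k]] : [set x | exists2 i, (i < n)%N & sorbit d (t i) x] (u k).
  by rewrite -u_image; exists k.
exists i => //; have [k' k'_lt t_k'] := t_in_first_block ilt.
have idx_lt : ((r * p %% q) * n + k' < n * q)%N by rewrite block_lt ?ltn_mod.
have := @iter_sigma_u 0 k' r q_gt0 k'_lt; rewrite mul0n !add0n -t_k' u_k.
move=> /(u_inj k_lt idx_lt) k_eq; rewrite t_k'; congr u.
by move: k_eq klt; case: (r * p %% q)%N => [|?]; rewrite ?mulSn; lia.
Qed.

Lemma t_eq_u i : (i < n)%N -> t i = u i.
Proof.
apply: incr_enum_unique (lt_chain t_incr) _ _ i.
  by move=> j k /andP[jk kn]; apply: u_incr; rewrite jk (leq_trans kn) // leq_pmulr.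
apply/seteqP; split=> [x [i ilt <-]|x [k klt <-]].
  by have [k klt ->] := t_in_first_block ilt; exists k.
by have [i ilt ->] := u_first_block_in_t klt; exists i.
Qed.

Lemma u_eq_listed m : (m < n * q)%N -> u m = listed_point m.
Proof.
move=> m_lt; have i_lt : (m %% n < n)%N by rewrite ltn_mod.
have y_lt : (m %/ n < q)%N by rewrite ltn_divLR // mulnC.
rewrite [in LHS](divn_eq m n) /listed_point /rot_point /orbit_point t_eq_u //.
have := @iter_sigma_u 0 (m %% n) (m %/ n * ps) q_gt0 i_lt; rewrite mul0n !add0n => ->.
by rewrite mulpsK (modn_small y_lt).
Qed.

End Rotational.

Lemma rotational_iff_listed :
  ((forall i, (i < n)%N -> forall x, sorbit d (t i) x -> t i <= x) /\
   (forall j, (j < n * q)%N -> sigma d (u j) = u ((j + n * p) %% (n * q))%N)) <->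
  (forall m, (m < n * q)%N -> u m = listed_point m).
Proof.
split=> [[t_least u_rot]|u_listed]; first exact: u_eq_listed.
have t_u i : (i < n)%N -> t i = u i.
  move=> ilt; rewrite u_listed ?(leq_trans ilt) ?leq_pmulr //.
  by rewrite /listed_point modn_small ?divn_small.
split=> [i ilt x [r _ <-]|j j_lt].
  rewrite -/(orbit_point i r) orbit_point_rot // -listed_point_block //.
  by rewrite -u_listed ?block_lt ?ltn_mod // t_u // u_le // leq_addl block_lt ?ltn_mod.
have i_lt : (j %% n < n)%N by rewrite ltn_mod.
have y_lt : (j %/ n < q)%N by rewrite ltn_divLR // mulnC.
rewrite (divn_eq j n) modn_blockD // !u_listed ?block_lt ?ltn_mod //.
by rewrite !listed_point_block // sigma_rot_point // rot_point_mod.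
Qed.

Lemma listed_incr_iff_u_listed :
  (forall m, (m.+1 < n * q)%N -> listed_point m < listed_point m.+1) <->
  (forall m, (m < n * q)%N -> u m = listed_point m).
Proof.
split=> [listed_succ|u_listed m m_lt].
  by apply: incr_enum_unique u_incr (lt_chain listed_succ) _; rewrite listed_image.
by rewrite -!u_listed ?(ltnW m_lt) //; apply: u_incr; rewrite ltnSn m_lt.
Qed.

Lemma rot_point_lt_next i y : (i.+1 < n)%N ->
  (forall z, (rot_digit i z <= rot_digit i.+1 z)%N) -> rot_point i y < rot_point i.+1 y.
Proof.
move=> i_lt digit_le; have ilt := ltnW i_lt.
pose g j := rot_point i.+1 (y + j * p) - rot_point i (y + j * p).
have g_step j : g j.+1 <= d%:R * g j by rewrite /g mulSnr addnA rot_point_diff_le.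
have g_per : g q = g 0%N.
  have e : ((y + q * p) %% q = y %% q)%N by rewrite addnC mulnC modnMDl.
  rewrite /g -[rot_point i.+1 _]rot_point_mod // -[rot_point i _]rot_point_mod //.
  by rewrite e !rot_point_mod // mul0n addn0.
have := subexpanding_periodic_ge0 (ler0n R d) expq_gt1 g_step g_per.
rewrite /g mul0n addn0 subr_ge0 le_eqVlt => /orP[/eqP e|//].
exfalso; apply: (@orbits_distinct i i.+1); first by rewrite ltnSn.
by apply/seteqP; split; [exact: sorbit_sub ilt i_lt e|exact: sorbit_sub i_lt ilt (esym e)].
Qed.

Lemma rot_point_lt_wrap y : (y.+1 < q)%N ->
  (forall z, ((z %% q).+1 < q)%N -> (rot_digit (n - 1) z <= rot_digit 0 z.+1)%N) ->
  (rot_digit (n - 1) (q - p.+1) < rot_digit 0 (q - p))%N ->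
  rot_point (n - 1) y < rot_point 0 y.+1.
Proof.
move=> y_lt digit_le digit_lt; have last_lt : (n - 1 < n)%N by lia.
have p_range : (0 < p < q)%N by rewrite p_gt0 p_lt_q.
have [J YJ before_J] := modn_visit_before p_range p_ps y_lt.
pose g j := rot_point 0 (y.+1 + j * p) - rot_point (n - 1) (y + j * p).
have g_step j : (j < J)%N -> g j.+1 <= d%:R * g j.
  move=> jJ; rewrite /g mulSnr !addnA rot_point_diff_le // addSn.
  exact: digit_le (before_J j jJ).
have digit0 : rot_digit 0 (y.+1 + J * p) = rot_digit 0 (q - p).
  by rewrite -rot_digit_mod addSn -addn1 -modnDml YJ addn1 subnSK // rot_digit_mod.
have digit1 : rot_digit (n - 1) (y + J * p) = rot_digit (n - 1) (q - p.+1).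
  by rewrite -rot_digit_mod YJ.
have gJ_gt0 : 0 < g J.
  have : 0 < d%:R * g J.
    move: digit_lt; rewrite -(ler_nat R) -addn1 natrD => ?.
    have := @rot_point_range 0 (y.+1 + J * p + p) n_gt0.
    have := rot_point_range (y + J * p + p) last_lt.
    by rewrite /g mulrBr !rot_point_step // digit0 digit1 => /andP[? ?] /andP[? ?]; lra.
  by rewrite pmulr_rgt0 // ltr0n (leq_trans _ d_ge2).
have := subexpanding_gt0 (ler0n R d) g_step gJ_gt0.
by rewrite /g mul0n !addn0 subr_gt0.
Qed.

Lemma listed_point_incr :
  (forall m, (m.+1 < n * q)%N -> (listed_digit m <= listed_digit m.+1)%N) ->
  (rot_digit (n - 1) (q - p.+1) < rot_digit 0 (q - p))%N ->
  forall m, (m.+1 < n * q)%N -> listed_point m < listed_point m.+1.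
Proof.
move=> digit_mono digit_lt m m_lt.
have y_lt : (m %/ n < q)%N by rewrite ltn_divLR // mulnC ltnW.
have i_lt : (m %% n < n)%N by rewrite ltn_mod.
move: m_lt; rewrite (divn_eq m n).
move: (m %/ n)%N (m %% n)%N y_lt i_lt => y i y_lt i_lt m_lt.
case: (ltnP i.+1 n) => [i_next|i_last].
  rewrite -addnS !listed_point_block //; apply: rot_point_lt_next => // z.
  rewrite -rot_digit_mod -[rot_digit i.+1 z]rot_digit_mod -!listed_digit_block //.
  by rewrite addnS digit_mono // -addnS block_lt ?ltn_mod.
have i_eq : i = (n - 1)%N by lia.
have last_lt : (n - 1 < n)%N by lia.
rewrite {}i_eq block_succ // in m_lt *.
have y_succ : (y.+1 < q)%N by move: m_lt; rewrite addn0 mulnC ltn_pmul2l.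
rewrite !listed_point_block //; apply: rot_point_lt_wrap => // z z_lt.
have e : (z.+1 %% q = (z %% q).+1)%N by rewrite -addn1 -modnDml addn1 modn_small.
rewrite -rot_digit_mod -[rot_digit 0 z.+1]rot_digit_mod e -!listed_digit_block //.
by rewrite -block_succ // digit_mono // block_succ // block_lt.
Qed.

Lemma digits_of_listed_incr :
  (forall m, (m.+1 < n * q)%N -> listed_point m < listed_point m.+1) ->
  (forall m, (m.+1 < n * q)%N -> (listed_digit m <= listed_digit m.+1)%N) /\
  (rot_digit (n - 1) (q - p.+1) < rot_digit 0 (q - p))%N.
Proof.
move=> listed_succ; have d_gt0 : (0 : R) < d%:R by rewrite ltr0n (leq_trans _ d_ge2).
have listed_step m : d%:R * listed_point m =
    (listed_digit m)%:R + rot_point (m %% n) (m %/ n + p).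
  by rewrite rot_point_step ?ltn_mod.
split=> [m m_lt|].
  have := listed_succ m m_lt; rewrite -(ltr_pM2l d_gt0) !listed_step => lt_step.
  apply: nat_le_of_ltrD lt_step _ _.
    by case/andP: (rot_point_range (m %/ n + p) (ltn_pmod m n_gt0)).
  by case/andP: (rot_point_range (m.+1 %/ n + p) (ltn_pmod m.+1 n_gt0)).
(* Equal digits would let sigma preserve the order of the entries around
   position [(q - p) * n], whose images are the last and the first entry. *)
rewrite ltnNge; apply/negP => digit_ge; have last_lt : (n - 1 < n)%N by lia.
have wrap_lt : rot_point (n - 1) (q - 1) < rot_point 0 0.
  have := listed_succ ((q - p.+1) * n + (n - 1))%N.
  rewrite block_succ // subnSK // block_lt ?ltn_subrL ?p_gt0 // => /(_ isT).
  rewrite !listed_point_block // -(ltr_pM2l d_gt0) !rot_point_step //.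
  have -> : (q - p.+1 + p = q - 1)%N by lia.
  rewrite subnK ?(ltnW p_lt_q) // -[rot_point 0 q]rot_point_mod // modnn.
  by move: digit_ge; rewrite -(ler_nat R) => ?; lra.
have := @lt_chain _ _ _ _ listed_succ 0 ((q - 1) * n + (n - 1))%N.
rewrite addn_gt0 muln_gt0 subn_gt0 q_ge2 n_gt0 block_lt ?ltn_subrL // => /(_ isT).
rewrite listed_point_block // [listed_point 0]/listed_point mod0n div0n.
by move/(lt_trans wrap_lt); rewrite ltxx.
Qed.

Lemma rotational_iff_monotone_digits :
  ((forall i, (i < n)%N -> forall x, sorbit d (t i) x -> t i <= x) /\
   (forall j, (j < n * q)%N -> sigma d (u j) = u ((j + n * p) %% (n * q))%N)) <->
  ((forall m, (m.+1 < n * q)%N -> (listed_digit m <= listed_digit m.+1)%N) /\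
   (rot_digit (n - 1) (q - p.+1) < rot_digit 0 (q - p))%N).
Proof.
apply: (iff_trans rotational_iff_listed).
apply: (iff_trans (iff_sym listed_incr_iff_u_listed)).
by split=> [/digits_of_listed_incr|[] /listed_point_incr].
Qed.

End RotationalUnion.

Local Open Scope card_scope.

Theorem theorem3p1 (R : realType) (d q n p ps : nat)
  (t : nat -> R) (a : nat -> nat -> nat) (u : nat -> R) :
  (2 <= d)%N -> (2 <= q)%N -> (1 <= n)%N ->
  (p < q)%N -> coprime p q -> (p * ps %% q = 1 %% q)%N ->
  (forall i, (i < n)%N -> 0 <= t i < 1) ->
  (forall i, (i < n)%N -> sorbit d (t i) #= `I_q) ->
  (forall i j, (i < j < n)%N -> sorbit d (t i) <> sorbit d (t j)) ->
  (forall i, (i.+1 < n)%N -> t i < t i.+1) ->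
  (forall i k, (i < n)%N -> (k < q)%N -> (a i k < d)%N) ->
  (forall i, (i < n)%N -> t i = qtuple d q (a i)) ->
  (forall j k, (j < k < n * q)%N -> u j < u k) ->
  [set u j | j in `I_(n * q)] =
    [set x | exists2 i, (i < n)%N & sorbit d (t i) x] ->
  ( ((forall i, (i < n)%N -> forall x, sorbit d (t i) x -> t i <= x) /\
     (forall j, (j < n * q)%N -> sigma d (u j) = u ((j + n * p) %% (n * q))%N))
    <->
    ((forall m, (m.+1 < n * q)%N ->
        (a (m %% n) (((m %/ n) * ps) %% q) <= a (m.+1 %% n) (((m.+1 %/ n) * ps) %% q))%N)
     /\
     (a (n - 1) ((q - ((p + 1) * ps) %% q) %% q) < a 0 ((q - (p * ps) %% q) %% q))%N) ).
Proof.
move=> d_ge2 q_ge2 n_gt0 p_lt_q _ p_ps t_range _ orbits_distinct t_incr a_lt_d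
  t_qtuple u_incr u_image.
rewrite -!modn_compl_mul ?addn1 ?(ltnW p_lt_q) //.
exact: (rotational_iff_monotone_digits d_ge2 q_ge2 n_gt0 p_lt_q p_ps t_range
  orbits_distinct t_incr a_lt_d t_qtuple u_incr u_image).
Qed.
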